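(* Assume (A1)–(A3) below. For any $\omega\in\Delta^{L-1}$ and any two positive definite matrices $W_1,W_2$ with $\lambda(W_1)=\lambda(W_2)=\omega$, $$V(W_1;\Omega_\omega)=V(W_2;\Omega_\omega)=\omega'D^{-1}\Omega_\omega D^{-1}\omega,$$ where $D=\mathrm{diag}(\gamma_1,\dots,\gamma_L)$ and $\Omega_\omega=\Omega(\beta^*(\omega))$.
   Context: Observe i.i.d. $(Y_i,D_i,\mathbf Z_i)$ with $Y_i\in\mathbb R$, $D_i\in\{0,1\}$, $\mathbf Z_i=(Z_{1i},\dots,Z_{Li})'\in\{0,1\}^L$, $L\ge2$; potential outcomes $Y_i(0),Y_i(1)$, compliance type $D_i(\cdot):\{0,1\}^L\to\{0,1\}$, $D_i=D_i(\mathbf Z_i)$, $Y_i=D_iY_i(1)+(1-D_i)Y_i(0)$. $p_\ell=P(Z_{\ell i}=1)$, $\pi_\ell,\rho_\ell$ the differences of $\mathbb E[D_i\mid Z_{\ell i}=z]$, $\mathbb E[Y_i\mid Z_{\ell i}=z]$ between $z=1$ and $0$, $\mathrm{Wald}_\ell=\rho_\ell/\pi_\ell$, $\gamma_\ell=\mathrm{Cov}(D_i,Z_{\ell i})$, $\boldsymbol\gamma=(\gamma_\ell)_\ell$, $\Sigma_Z=\mathrm{Var}(\mathbf Z_i)$. $g_i(\beta)$ is the vector with entries $(Y_i-\beta D_i)(Z_{\ell i}-p_\ell)$, $\Omega(\beta)=\mathbb E[g_i(\beta)g_i(\beta)']$. $\lambda_\ell(W)=\gamma_\ell[W\boldsymbol\gamma]_\ell/(\boldsymbol\gamma'W\boldsymbol\gamma)$;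 $\Delta^{L-1}$ is the probability simplex in $\mathbb R^L$; $\beta^*(\omega)=\sum_\ell\omega_\ell\mathrm{Wald}_\ell$. The sandwich variance is $V(W;\Omega)=\boldsymbol\gamma'W\Omega W\boldsymbol\gamma/(\boldsymbol\gamma'W\boldsymbol\gamma)^2$. Assumptions: (A1) $(Y_i(0),Y_i(1),D_i(\cdot))$ independent of $\mathbf Z_i$. (A2) $D_i(z)$ nondecreasing in each coordinate for every $i$. (A3) $p_\ell>0$, $\pi_\ell>0$ for all $\ell$; $\Sigma_Z$ positive definite. *)

From HB Require Import structures.
From mathcomp Require Import all_boot all_order all_algebra.
From mathcomp Require Import all_classical all_reals all_analysis.
Set Implicit Arguments. Unset Strict Implicit. Unset Printing Implicit Defensive.
Import Order.TTheory GRing.Theory Num.Theory.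
Local Open Scope ring_scope.
Local Open Scope classical_set_scope.

Section IVModel.
Context (L : nat) {d : measure_display} {T : measurableType d} {R : realType}
  (P : probability T R).

(* Primitives of one observation i (all population quantities only depend on
   the common law of the i.i.d. observations):
   Y0, Y1 potential outcomes, Ctype the compliance type D_i(.) : {0,1}^L -> {0,1},
   Zb l the instrument Z_{l i} (as a boolean). *)
Variables (Y0 Y1 : T -> R) (Ctype : T -> {ffun {ffun 'I_L -> bool} -> bool})
  (Zb : 'I_L -> T -> bool).

Definition Ef (X : T -> R) : R := fine ('E_P[X])%E.
Definition prob (A : set T) : R := fine (P A).

Definition condE (X : T -> R) (b : T -> bool) : R :=
  Ef (fun t => X t * (b t)%:R) / prob [set t | b t].

Definition zvec (t : T) : {ffun 'I_L -> bool} := [ffun l => Zb l t].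
Definition Zr (l : 'I_L) (t : T) : R := (Zb l t)%:R.
Definition Dobs (t : T) : R := (Ctype t (zvec t))%:R.
Definition Yobs (t : T) : R := Dobs t * Y1 t + (1 - Dobs t) * Y0 t.

Definition pZ (l : 'I_L) : R := prob [set t | Zb l t].
Definition piZ (l : 'I_L) : R :=
  condE Dobs (Zb l) - condE Dobs (fun t => ~~ Zb l t).
Definition rhoZ (l : 'I_L) : R :=
  condE Yobs (Zb l) - condE Yobs (fun t => ~~ Zb l t).
Definition Wald (l : 'I_L) : R := rhoZ l / piZ l.

Definition gam : 'cV[R]_L := \col_l fine (covariance P Dobs (Zr l)).
Definition SigmaZ : 'M[R]_L := \matrix_(l, k) fine (covariance P (Zr l) (Zr k)).

Definition gmom (beta : R) (l : 'I_L) (t : T) : R :=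
  (Yobs t - beta * Dobs t) * (Zr l t - pZ l).
Definition Omega (beta : R) : 'M[R]_L :=
  \matrix_(l, k) Ef (fun t => gmom beta l t * gmom beta k t).

Definition betastar (om : 'cV[R]_L) : R := \sum_l om l 0 * Wald l.

(* (A1): (Y_i(0), Y_i(1), D_i(.)) independent of Z_i, stated on the generating
   pi-system {Y0 in A, Y1 in B, D(.) = c} x {Z = z} *)
Definition A1_indep : Prop :=
  forall (A B : set R), measurable A -> measurable B ->
  forall (c : {ffun {ffun 'I_L -> bool} -> bool}) (z : {ffun 'I_L -> bool}),
    P ([set t | A (Y0 t) /\ B (Y1 t) /\ Ctype t = c] `&` [set t | zvec t = z])
    = (P [set t | A (Y0 t) /\ B (Y1 t) /\ Ctype t = c] * P [set t | zvec t = z])%E.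

Definition A2_monotone : Prop :=
  forall t (z z' : {ffun 'I_L -> bool}),
    (forall l, z l ==> z' l) -> Ctype t z ==> Ctype t z'.

End IVModel.

Section MatrixDefs.
Context {R : realType} {L : nat}.
Definition qf (u : 'cV[R]_L) (A : 'M[R]_L) (v : 'cV[R]_L) : R := (u^T *m A *m v) 0 0.
Definition posdef (A : 'M[R]_L) : Prop :=
  A^T = A /\ forall x : 'cV[R]_L, x != 0 -> 0 < qf x A x.
Definition lambdaW (g : 'cV[R]_L) (W : 'M[R]_L) : 'cV[R]_L :=
  \col_l (g l 0 * (W *m g) l 0 / qf g W g).
Definition Vsand (g : 'cV[R]_L) (W Om : 'M[R]_L) : R :=
  qf g (W *m Om *m W) g / (qf g W g) ^+ 2.
Definition in_simplex (om : 'cV[R]_L) : Prop :=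
  (forall l, 0 <= om l 0) /\ \sum_l om l 0 = 1.
End MatrixDefs.

(* lambda(W) = omega says exactly that D (W gamma) = (gamma' W gamma) omega, i.e.
   W gamma = (gamma' W gamma) D^-1 omega.  As W is symmetric, the sandwich
   gamma' W Omega W gamma / (gamma' W gamma)^2 only involves W through W gamma, so the
   scalar cancels and leaves omega' D^-1 Omega D^-1 omega, whatever W is.  D is invertible
   because gamma_l = Cov(D, Z_l) = Var(Z_l) pi_l, and both factors are positive under (A3). *)
From HB Require Import structures.
From mathcomp Require Import all_boot all_order all_algebra.
From mathcomp Require Import all_classical all_reals all_analysis.
From mathcomp Require Import ring.
Set Implicit Arguments. Unset Strict Implicit. Unset Printing Implicit Defensive.
Import Order.TTheory GRing.Theory Num.Theory.
Local Open Scope ring_scope.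
Local Open Scope classical_set_scope.

Section Indicators.
Context {d : measure_display} {T : measurableType d} {R : realType}
  (P : probability T R).
Implicit Types a b z : T -> bool.

Definition ind b : T -> R := fun t => (b t)%:R.

Lemma measurable_andb a b : measurable [set t | a t] -> measurable [set t | b t] ->
  measurable [set t | a t && b t].
Proof.
move=> ma mb; have -> : [set t | a t && b t] = [set t | a t] `&` [set t | b t].
  by apply/seteqP; split => t /=; [move/andP | move=> [-> ->]].
exact: measurableI.
Qed.

Lemma setC_bool b : [set t | ~~ b t] = ~` [set t | b t].
Proof. by apply/seteqP; split => t /=; case: (b t). Qed.

Lemma measurable_negb b : measurable [set t | b t] -> measurable [set t | ~~ b t].
Proof. by move=> mb; rewrite setC_bool; exact: measurableC. Qed.

Lemma indE b : ind b = \1_[set t | b t].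
Proof.
apply/funext => t; rewrite /ind indicE.
by have [bt|/negP bt] := boolP (b t); [rewrite mem_set | rewrite memNset].
Qed.

Lemma Lfun1_ind b : measurable [set t | b t] -> ind b \in Lfun P 1.
Proof.
move=> mb; apply/Lfun1_integrable/measurable_bounded_integrable => //.
- by rewrite (le_lt_trans (probability_le1 P measurableT)) ?ltry.
- by rewrite indE; exact: measurable_realfun.measurable_indic.
- exists 1; split => // M M1 t _ /=.
  by rewrite /ind; case: (b t); rewrite ?normr1 ?normr0 ltW // (lt_trans _ M1).
Qed.

Lemma probE (A : set T) : measurable A -> P A = (prob P A)%:E.
Proof. by move=> mA; rewrite /prob fineK // fin_num_measure. Qed.

Lemma Ef_ind b : measurable [set t | b t] -> Ef P (ind b) = prob P [set t | b t].
Proof. by move=> mb; rewrite /Ef indE expectation_indic. Qed.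

Lemma prob_negb b : measurable [set t | b t] ->
  prob P [set t | ~~ b t] = 1 - prob P [set t | b t].
Proof. by move=> mb; rewrite setC_bool /prob probability_setC // probE // -EFinB. Qed.

Lemma prob_andb_negb a z : measurable [set t | a t] -> measurable [set t | z t] ->
  prob P [set t | a t] = prob P [set t | a t && z t] + prob P [set t | a t && ~~ z t].
Proof.
move=> ma mz.
have maz := measurable_andb ma mz.
have manz := measurable_andb ma (measurable_negb mz).
rewrite /prob -fineD ?fin_num_measure // -measureU //.
  congr (fine (P _)); apply/seteqP; split => t /=; last by case=> /andP[].
  by move=> ->; case: (z t); [left | right].
by apply/seteqP; split => t //= [/andP[_ ->] /andP[]].
Qed.

Lemma covariance_ind a b : measurable [set t | a t] -> measurable [set t | b t] ->
  fine (covariance P (ind a) (ind b)) =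
  prob P [set t | a t && b t] - prob P [set t | a t] * prob P [set t | b t].
Proof.
move=> ma mb; have mab := measurable_andb ma mb.
have ind_mul : (ind a * ind b)%R = ind (fun t => a t && b t).
  by apply/funext => t; rewrite /ind fctE -natrM mulnb.
rewrite covarianceE ?Lfun1_ind // ind_mul ?Lfun1_ind //.
by rewrite !indE !expectation_indic // !probE.
Qed.

Lemma variance_ind b : measurable [set t | b t] ->
  fine (covariance P (ind b) (ind b)) = prob P [set t | b t] * prob P [set t | ~~ b t].
Proof.
move=> mb; rewrite covariance_ind // prob_negb //.
by under eq_set do rewrite andbb; rewrite mulrBr mulr1.
Qed.

Lemma condE_ind a z : measurable [set t | a t] -> measurable [set t | z t] ->
  condE P (ind a) z = prob P [set t | a t && z t] / prob P [set t | z t].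
Proof.
move=> ma mz; rewrite /condE -(Ef_ind (measurable_andb ma mz)).
by congr (Ef P _ / _); apply/funext => t; rewrite /ind -natrM mulnb.
Qed.

Lemma covariance_ind_condE a z :
  measurable [set t | a t] -> measurable [set t | z t] ->
  prob P [set t | z t] != 0 -> prob P [set t | ~~ z t] != 0 ->
  fine (covariance P (ind a) (ind z)) =
  prob P [set t | z t] * prob P [set t | ~~ z t] *
    (condE P (ind a) z - condE P (ind a) (fun t => ~~ z t)).
Proof.
move=> ma mz pz0 pnz0.
have mnz := measurable_negb mz.
rewrite covariance_ind // !condE_ind // (prob_andb_negb ma mz).
move: pnz0; rewrite prob_negb // => pnz0.
by field; rewrite pz0 pnz0.
Qed.

End Indicators.

Lemma posdef_diag_gt0 (R : realType) (L : nat) (A : 'M[R]_L) (i : 'I_L) :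
  posdef A -> 0 < A i i.
Proof.
move=> [_ Apos]; have := Apos (delta_mx i 0).
rewrite /qf trmx_delta -rowE -colE !mxE; apply.
by apply/negP => /eqP/matrixP/(_ i 0); rewrite !mxE !eqxx => /eqP; rewrite oner_eq0.
Qed.

Section InstrumentModel.
Context (L : nat) {d : measure_display} {T : measurableType d} {R : realType}
  (P : probability T R) (Ctype : T -> {ffun {ffun 'I_L -> bool} -> bool})
  (Zb : 'I_L -> T -> bool).
Hypotheses (mZ : forall l, measurable [set t | Zb l t])
  (mC : forall c, measurable [set t | Ctype t = c]).

Lemma measurable_zvec (z : {ffun 'I_L -> bool}) : measurable [set t | zvec Zb t = z].
Proof.
have -> : [set t | zvec Zb t = z] = \bigcap_(l in [set: 'I_L]) [set t | Zb l t = z l].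
  apply/seteqP; split => t /=; first by move=> <- l _; rewrite ffunE.
  by move=> Hz; apply/ffunP => l; rewrite ffunE; apply: Hz.
apply: fin_bigcap_measurable; first exact: finite_finset.
move=> l _; case: (z l); first exact: mZ.
have -> : [set t | Zb l t = false] = [set t | ~~ Zb l t].
  by apply/seteqP; split => t /=; case: (Zb l t).
exact: measurable_negb.
Qed.

Lemma measurable_treated : measurable [set t | Ctype t (zvec Zb t)].
Proof.
have -> : [set t | Ctype t (zvec Zb t)] =
  \bigcup_(c in [set: {ffun {ffun 'I_L -> bool} -> bool}])
    \bigcup_(z in [set z | c z]) ([set t | Ctype t = c] `&` [set t | zvec Zb t = z]).
  apply/seteqP; split => t /=; first by exists (Ctype t) => //; exists (zvec Zb t).
  by move=> [c _ [z /= cz [-> ->]]].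
apply: fin_bigcup_measurable; first exact: finite_finset.
move=> c _; apply: fin_bigcup_measurable; first exact: finite_finset.
by move=> z _; apply: measurableI; [exact: mC | exact: measurable_zvec].
Qed.

Lemma gam_neq0 (l : 'I_L) : 0 < pZ P Zb l -> 0 < piZ P Ctype Zb l ->
  posdef (SigmaZ P Zb) -> gam P Ctype Zb l 0 != 0.
Proof.
move=> p_gt0 pi_gt0 /(posdef_diag_gt0 l).
rewrite mxE [fine _](variance_ind P (mZ l)) => var_gt0.
have pnz0 : prob P [set t | ~~ Zb l t] != 0.
  by apply: contraTneq var_gt0 => ->; rewrite mulr0 ltxx.
rewrite mxE [fine _](covariance_ind_condE measurable_treated (mZ l) (lt0r_neq0 p_gt0) pnz0).
by rewrite gt_eqF // mulr_gt0.
Qed.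

End InstrumentModel.

Lemma unitmx_diag (R : fieldType) (n : nat) (v : 'rV[R]_n) :
  (forall i, v 0 i != 0) -> diag_mx v \in unitmx.
Proof. by move=> v_neq0; rewrite unitmxE det_diag unitfE; apply/prodf_neq0. Qed.

Section SandwichVariance.
Context {R : realType} {L : nat} (g : 'cV[R]_L) (W Om : 'M[R]_L).
Hypotheses (g_neq0 : forall l, g l 0 != 0) (WT : W^T = W) (qf_neq0 : qf g W g != 0).

Let Dm := diag_mx g^T.

Lemma mulmx_lambdaW : W *m g = qf g W g *: (invmx Dm *m lambdaW g W).
Proof.
have Dm_unit : Dm \in unitmx by apply: unitmx_diag => i; rewrite mxE.
rewrite -[LHS](mulKmx Dm_unit) scalemxAr; congr (_ *m _).
apply/matrixP => i j; rewrite mul_diag_mx !mxE (ord1 j).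
by rewrite [RHS]mulrC divfK.
Qed.

Lemma Vsand_lambdaW :
  Vsand g W Om = qf (lambdaW g W) (invmx Dm *m Om *m invmx Dm) (lambdaW g W).
Proof.
rewrite /Vsand {1}/qf.
have -> : g^T *m (W *m Om *m W) *m g = (W *m g)^T *m Om *m (W *m g).
  by rewrite trmx_mul WT !mulmxA.
have -> : (W *m g)^T = qf g W g *: ((lambdaW g W)^T *m invmx Dm).
  by rewrite mulmx_lambdaW linearZ /= trmx_mul trmx_inv tr_diag_mx.
rewrite mulmx_lambdaW -!scalemxAl -scalemxAr !mulmxA scalerA mxE -/(qf g W g) [in RHS]/qf !mulmxA.
set c := qf g W g.
by rewrite -expr2 mulrAC divff ?mul1r // expf_neq0.
Qed.

End SandwichVariance.

Theorem proposition7 (L : nat) (d : measure_display) (T : measurableType d)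
  (R : realType) (P : probability T R)
  (Y0 Y1 : T -> R) (Ctype : T -> {ffun {ffun 'I_L -> bool} -> bool})
  (Zb : 'I_L -> T -> bool)
  (HL : (2 <= L)%N)
  (mY0 : measurable_fun setT Y0) (mY1 : measurable_fun setT Y1)
  (mZ : forall l, measurable [set t | Zb l t])
  (mC : forall c, measurable [set t | Ctype t = c])
  (A1 : A1_indep P Y0 Y1 Ctype Zb)
  (A2 : A2_monotone Ctype)
  (A3p : forall l, 0 < pZ P Zb l)
  (A3pi : forall l, 0 < piZ P Ctype Zb l)
  (A3S : posdef (SigmaZ P Zb))
  (om : 'cV[R]_L) (Hom : in_simplex om)
  (W1 W2 : 'M[R]_L) (HW1 : posdef W1) (HW2 : posdef W2)
  (Hl1 : lambdaW (gam P Ctype Zb) W1 = om)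
  (Hl2 : lambdaW (gam P Ctype Zb) W2 = om) :
  let g := gam P Ctype Zb in
  let Dm := diag_mx g^T in
  let Om := Omega P Y0 Y1 Ctype Zb (betastar P Y0 Y1 Ctype Zb om) in
  Vsand g W1 Om = Vsand g W2 Om /\
  Vsand g W2 Om = qf om (invmx Dm *m Om *m invmx Dm) om.
Proof.
move=> g Dm Om.
have g_neq0 l : g l 0 != 0 by exact: gam_neq0.
have g_ne0 : g != 0.
  by apply: contraTneq (g_neq0 (Ordinal (ltnW HL))) => ->; rewrite mxE eqxx.
have Vsand_om W : posdef W -> lambdaW g W = om ->
    Vsand g W Om = qf om (invmx Dm *m Om *m invmx Dm) om.
  by move=> [WT Wpos] <-; rewrite Vsand_lambdaW // gt_eqF // Wpos.
by rewrite !Vsand_om.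
Qed.
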